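(* Let $X$ be a topological space with $|X|\ge 2$ and $G$ an infinite Abelian group. If $X$ admits a non-constant continuous real-valued function, then every Korovin orbit $G_f$ in $X^G$ is functionally Hausdorff.
   Context: $X^G$ carries the product topology. For $f\in X^G$ and $g\in G$ let $gf\in X^G$ be given by $(gf)(x)=f(xg)$, and let $G_f=\{gf:g\in G\}\subseteq X^G$ with the subspace topology. The map $f\colon G\to X$ is a Korovin mapping if $\pi_M(G_f)=X^M$ for every countable $M\subseteq G$, where $\pi_M\colon X^G\to X^M$ is the projection; in that case $G_f$ is called a Korovin orbit. A space is functionally Hausdorff if continuous real-valued functions on it separate its points. *)

From HB Require Import structures.
From mathcomp Require Import all_boot all_order all_algebra.
From mathcomp Require Import all_classical all_reals topology normedtype.
Set Implicit Arguments. Unset Strict Implicit. Unset Printing Implicit Defensive.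
Import Order.TTheory GRing.Theory Num.Theory.
Import numFieldNormedType.Exports.
Local Open Scope classical_set_scope.
Local Open Scope ring_scope.

(* The group G is abelian, written additively (a zmodType). X^G with the
   product topology is [prod_topology (fun _ : G => X)]. *)
Definition power_space (G : zmodType) (X : topologicalType) : topologicalType :=
  prod_topology (fun _ : G => X).

(* (g f)(x) = f (x g), written additively: f (x + g). *)
Definition shift (G : zmodType) (X : topologicalType) (f : G -> X) (g : G)
  : power_space G X := fun x => f (x + g).

Definition shift_orbit (G : zmodType) (X : topologicalType) (f : G -> X)
  : set (power_space G X) := range (shift f).

(* Korovin mapping: pi_M(G_f) = X^M for every countable M ⊆ G, i.e.
   every map M -> X (given as the restriction to M of some p : G -> X)
   is the restriction to M of some element g f of G_f. *)
Definition korovin_mapping (G : zmodType) (X : topologicalType) (f : G -> X) :=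
  forall M : set G, countable M ->
    forall p : G -> X, exists g : G, forall m, M m -> shift f g m = p m.

Definition functionally_hausdorff (R : realType) (T : topologicalType) :=
  forall a b : T, a <> b -> exists h : T -> R, continuous h /\ h a <> h b.

(** The carrier of [subspace A] is all of [X^G], and points off the orbit are
    isolated there, so an indicator function separates them from everything
    else.  Two distinct orbit points [g1 f] and [g2 f] are separated through a
    single coordinate: the Korovin property for the two-point set [{g1, g2}]
    yields a coordinate [c] at which they take any two prescribed values
    [x], [y]; choosing [h x <> h y] for a non-constant continuous [h : X -> R],
    the map [z |-> h (z c)] separates them. *)
From Pilot Require Import Defs.
From HB Require Import structures.
From mathcomp Require Import all_boot all_order all_algebra.
From mathcomp Require Import all_classical all_reals topology normedtype numfun.
Import numFieldNormedType.Exports.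
Import GRing.Theory.
Local Open Scope classical_set_scope.
Local Open Scope ring_scope.

Lemma continuous_subspace_indic (R : realType) (T : topologicalType)
    (A B : set T) :
  A `&` B = set0 -> continuous (\1_B : subspace A -> R).
Proof.
move=> AB0; apply: (@subspace_eq_continuous _ _ _ (cst 0)); last first.
  exact: cst_continuous.
move=> z; rewrite inE => Az; rewrite indicE memNset // => Bz.
by have : (A `&` B) z by []; rewrite AB0.
Qed.

Lemma subspace_separate_out (R : realType) (T : topologicalType)
    (A : set T) (a b : T) :
  ~ A a \/ ~ A b -> a <> b ->
  exists h : subspace A -> R, continuous h /\ h a <> h b.
Proof.
move=> Aab ab; wlog Aa : a b ab {Aab} / ~ A a.
  move=> sep; case: Aab => [Aa|Ab]; first exact: sep.
  have [h [hc hba]] := sep b a (nesym ab) Ab.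
  by exists h; split => //; apply: nesym.
exists \1_[set a]; split.
  apply: continuous_subspace_indic; apply/disjoints_subset => z Az /= za.
  by apply: Aa; rewrite -za.
rewrite !indicE mem_set // memNset /=; last exact: nesym.
by apply/eqP; rewrite oner_eq0.
Qed.

(* Plain [shift] is normedtype's translation, hence the qualified name. *)
Lemma korovin_shifts_interpolate {G : zmodType} {X : topologicalType}
    (f : G -> X) (g1 g2 : G) (x y : X) :
  korovin_mapping f -> g1 != g2 ->
  exists c : G, Defs.shift f g1 c = x /\ Defs.shift f g2 c = y.
Proof.
move=> hf g12.
have cM : countable [set g1; g2] by exact/finite_set_countable/finite_set2.
have [c hc] := hf _ cM (fun m => if m == g1 then x else y).
exists c; rewrite /Defs.shift ![c + _]addrC.
have := hc g1 (or_introl erefl); have := hc g2 (or_intror erefl).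
by rewrite /Defs.shift eqxx eq_sym (negbTE g12) => -> ->.
Qed.

Lemma shift_orbit_separate (R : realType) (X : topologicalType) (G : zmodType)
    (f : G -> X) (g1 g2 : G) :
  korovin_mapping f ->
  (exists h : X -> R, continuous h /\ exists x y : X, h x <> h y) ->
  Defs.shift f g1 <> Defs.shift f g2 ->
  exists h : subspace (shift_orbit f) -> R,
    continuous h /\ h (Defs.shift f g1) <> h (Defs.shift f g2).
Proof.
move=> hf [h [hc [x [y hxy]]]] f12.
have g12 : g1 != g2 by apply: contra_notN f12 => /eqP ->.
have [c [fg1c fg2c]] := korovin_shifts_interpolate _ _ _ x y hf g12.
exists (fun z : power_space G X => h (z c)); split; last by rewrite fg1c fg2c.
apply: continuous_subspaceT => z.
exact: continuous_comp (@proj_continuous _ (fun=> X) c z) (hc _).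
Qed.

Theorem proposition4p3 (R : realType) (X : topologicalType) (G : zmodType)
  (hX2 : exists x y : X, x <> y)
  (hGinf : infinite_set [set: G])
  (hnc : exists h : X -> R, continuous h /\ exists x y : X, h x <> h y)
  (f : G -> X) (hf : korovin_mapping f) :
  functionally_hausdorff R (subspace (shift_orbit f)).
Proof.
move=> a b.
have [[[g1 _ <-] [g2 _ <-]]|out] := pselect (shift_orbit f a /\ shift_orbit f b).
  exact: shift_orbit_separate.
by move/not_andP: out; exact: (@subspace_separate_out R (power_space G X)).
Qed.
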